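(* Let $G$ be a cyclically $4$-edge-connected cubic graph and $E(A,B)=\{e_1,e_2,e_3,e_4\}$ a cyclic $4$-edge-cut of $G$, with $v_i$ the end-vertex of $e_i$ in $A$. Then each of the three graphs $G^A_{(12)}$, $G^A_{(13)}$, $G^A_{(14)}$ is $3$-edge-connected, and in each of them none of the edges $e^A_1,e^A_2,e^A_3,e^A_4$ is contained in a cyclic $3$-edge-cut. Moreover, if $G[A]$ is not a cycle of length four, then at least two of these three graphs are cyclically $4$-edge-connected.
   Context: Graphs may have parallel edges. An edge-cut $E(A,B)$ (edges between parts of a partition of $V(G)$) is a $k$-edge-cut if it has exactly $k$ edges, and cyclic if both $G[A]$ and $G[B]$ contain a cycle; $G$ is cyclically $k$-edge-connected if it has no cyclic edge-cut with fewer than $k$ edges. For a $4$-edge-cut $E(A,B)=\{e_1,\dots,e_4\}$ with $v_i$ the end of $e_i$ in $A$, and $\{i,j,k,\ell\}=\{1,2,3,4\}$: $G^A_{(ij)}$ is the cubic graph obtained from $G[A]$ by adding a new vertex $v_{ij}$ adjacent to $v_i$ and $v_j$, a new vertex $v_{k\ell}$ adjacent to $v_k$ and $v_\ell$, and an edge $e^A_{(ij)}=v_{ij}v_{k\ell}$. For each $m$, $e^A_m$ denotes the edge joining $v_m$ to the new vertex adjacent to it. *)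

From HB Require Import structures.
From mathcomp Require Import all_boot.
Set Implicit Arguments. Unset Strict Implicit. Unset Printing Implicit Defensive.

(* A finite multigraph: a finite vertex type, a finite edge type, and two
   endpoint maps (the orientation is irrelevant everywhere below). *)
Record mgraph := MGraph {
  vert : finType;
  edge : finType;
  src : edge -> vert;
  tgt : edge -> vert }.

Section Basics.
Variable G : mgraph.

Definition loopless : Prop := forall e : edge G, src e != tgt e.

(* degree; a loop would count twice *)
Definition deg (v : vert G) : nat :=
  #|[set e : edge G | src e == v]| + #|[set e : edge G | tgt e == v]|.

Definition cubic : Prop := forall v : vert G, deg v = 3.

Definition joins (e : edge G) (u w : vert G) : bool :=
  ((src e == u) && (tgt e == w)) || ((src e == w) && (tgt e == u)).

(* a cycle of length k.+1 in G: distinct vertices vs 0, ..., vs k and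
   distinct edges es i joining vs i and vs (i+1 mod k+1) *)
Definition is_cycle k (vs : 'I_k.+1 -> vert G) (es : 'I_k.+1 -> edge G) : Prop :=
  injective vs /\ injective es /\ (forall i, joins (es i) (vs i) (vs (ordS i))).

Definition has_cycle (S : {set vert G}) : Prop :=
  exists k (vs : 'I_k.+1 -> vert G) (es : 'I_k.+1 -> edge G),
    is_cycle vs es /\ (forall i, vs i \in S).

(* G[S] is a cycle of length four: a 4-cycle whose vertex set is exactly S and
   which uses every edge with both ends in S *)
Definition is_C4 (S : {set vert G}) : Prop :=
  exists (vs : 'I_4 -> vert G) (es : 'I_4 -> edge G),
    is_cycle vs es /\ (forall x, x \in S <-> exists i, vs i = x) /\
    (forall f, src f \in S -> tgt f \in S -> exists i, es i = f).

Definition cut (S : {set vert G}) : {set edge G} :=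
  [set e | (src e \in S) != (tgt e \in S)].

Definition cyclic_cut (S : {set vert G}) : Prop :=
  has_cycle S /\ has_cycle (~: S).

Definition cyc_edge_conn (k : nat) : Prop :=
  forall S : {set vert G}, cyclic_cut S -> k <= #|cut S|.

Definition edge_conn (k : nat) : Prop :=
  forall S : {set vert G}, S != set0 -> S != setT -> k <= #|cut S|.

End Basics.

(* The graph G^A_(0 j) (0-indexed: the edges e_0..e_3 of the cut, j in {1,2,3}).
   Vertices: the vertices of A, plus two new vertices: inr true = v_{0j},
   inr false = v_{kl}.  Edges: the edges of G[A]; inr (Some m) = e^A_m,
   joining v_m to the new vertex adjacent to it; inr None = e^A_(0j). *)
Section Construction.
Variables (G : mgraph) (A : {set vert G}).

Definition Avert : finType := {x : vert G | x \in A}.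
Definition Aedge : finType := {f : edge G | (src f \in A) && (tgt f \in A)}.

Lemma Aedge_src (f : Aedge) : src (val f) \in A.
Proof. by case/andP: (valP f). Qed.
Lemma Aedge_tgt (f : Aedge) : tgt (val f) \in A.
Proof. by case/andP: (valP f). Qed.

Variables (v : 'I_4 -> Avert) (j : 'I_4).

Definition side (m : 'I_4) : bool := (m == ord0) || (m == j).

Definition gvert : finType := (Avert + bool)%type.
Definition gedge : finType := (Aedge + option 'I_4)%type.

Definition gsrc (f : gedge) : gvert :=
  match f with
  | inl f => inl (exist _ (src (val f)) (Aedge_src f))
  | inr (Some m) => inl (v m)
  | inr None => inr true
  end.

Definition gtgt (f : gedge) : gvert :=
  match f with
  | inl f => inl (exist _ (tgt (val f)) (Aedge_tgt f))
  | inr (Some m) => inr (side m)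
  | inr None => inr false
  end.

Definition GA : mgraph := MGraph gsrc gtgt.

Definition eA (m : 'I_4) : edge GA := inr (Some m).

End Construction.

From Stdlib Require Import Classical.
From HB Require Import structures.
From mathcomp Require Import all_boot zify.
Set Implicit Arguments. Unset Strict Implicit. Unset Printing Implicit Defensive.

(* A cut [S] of [G^A_(0j)] is governed by its trace [T], the vertices of [A] in [S]: it consists of
   the edges of [G[A]] across [T], the new edge if the two new vertices are separated, and the edges
   [e^A_m] whose end [v_m] is separated from its new neighbour.  The edges of [G[A]] across [T],
   together with the [e_m] at ends in [T] (resp. outside [T]), form the cut of [T] (resp. [A - T])
   in [G].  In a cubic graph an acyclic set has fewer inner edges than vertices, so cyclic
   4-edge-connectivity gives every cut of [G] with two vertices on each side at least 4 edges,
   and a single vertex has a cut of 3.  A finite count then shows that [G^A_(0j)] has no cut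
   below 3, and that a cut of size at most 3 with two vertices on each side agrees with its trace
   on the ends and comes from a 4-edge-cut of [G] inside [A] splitting the ends as
   [{v_0, v_j} | rest].  If this happens for two values of [j], the two 4-edge-cuts cross; by
   submodularity each of the four corners has a cut of size 3 and contains one end, hence is a
   single vertex, so [|A| = 4] and [G[A]] is a 4-cycle. *)

Lemma card_set_sum (T : finType) (P : pred T) : #|[set x | P x]| = \sum_x P x.
Proof. by rewrite -sum1dep_card big_mkcond; apply: eq_bigr => x _; case: (P x). Qed.

Lemma sum_eq_mem (T : finType) (A : {set T}) x : \sum_(u in A) (x == u) = (x \in A).
Proof.
case: (boolP (x \in A)) => xA.
  by rewrite (bigD1 x) //= eqxx big1 // => u /andP[_ /negbTE]; rewrite eq_sym => ->.
by rewrite big1 // => u uA; apply/eqP; rewrite eqb0; apply: contraNneq xA => ->.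
Qed.

Lemma card_gt1_neq (T : finType) (A : {set T}) x : 1 < #|A| -> exists2 y, y \in A & y != x.
Proof.
move=> /card_gt1P [y [z [yA zA yz]]].
by have [yx|] := eqVneq y x; [exists z; rewrite // -yx eq_sym | exists y].
Qed.

Section Multigraph.
Variable G : mgraph.
Implicit Types (S T : {set vert G}) (f : edge G) (u w : vert G).

Definition inner T := [set f | (src f \in T) && (tgt f \in T)].

Definition incident f u := (src f == u) || (tgt f == u).

Definition inner_deg T u := #|[set f in inner T | incident f u]|.

(* the end of [f] other than [u]; junk [src f] if [u] is not an end of [f] *)
Definition other_end f u := if src f == u then tgt f else src f.

Lemma cutC T : cut (~: T) = cut T.
Proof. by apply/setP => f; rewrite !inE; case: (src f \in T); case: (tgt f \in T). Qed.

Lemma has_cycleS S T : S \subset T -> has_cycle S -> has_cycle T.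
Proof.
move=> /subsetP sST [k [vs [es [c h]]]]; exists k, vs, es; split => // i; exact: sST.
Qed.

Lemma cubic_handshake T : cubic G -> 3 * #|T| = 2 * #|inner T| + #|cut T|.
Proof.
move=> cubG; have -> : 3 * #|T| = \sum_(u in T) deg u.
  by rewrite (eq_bigr (fun _ => 3)) ?sum_nat_const 1?mulnC // => u _; rewrite cubG.
rewrite /deg; under eq_bigr do rewrite !card_set_sum.
rewrite big_split /= exchange_big [X in _ + X]exchange_big /=.
rewrite !card_set_sum big_distrr /= -!big_split /=.
by apply: eq_bigr => f _; rewrite !sum_eq_mem; case: (src f \in T); case: (tgt f \in T).
Qed.

Lemma joins_ends f u w : joins f u w ->
  (src f = u /\ tgt f = w) \/ (src f = w /\ tgt f = u).
Proof. by case/orP => /andP[/eqP -> /eqP ->]; [left|right]. Qed.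

Lemma joins_inner T f u w : joins f u w -> u \in T -> w \in T -> f \in inner T.
Proof. by rewrite inE => /joins_ends [][-> ->] -> ->. Qed.

Lemma joins_same f u w u' w' : joins f u w -> joins f u' w' ->
  (u = u' /\ w = w') \/ (u = w' /\ w = u').
Proof. by case/joins_ends=> [][<- <-] /joins_ends [][-> ->]; tauto. Qed.

Lemma incident_other_end f u : incident f u -> joins f u (other_end f u).
Proof.
rewrite /incident /joins /other_end.
by case: eqP => [->|_] /=; rewrite ?eqxx // => /eqP ->; rewrite !eqxx orbT.
Qed.

Hypothesis Hl : loopless G.

Lemma joins_neq f u w : joins f u w -> u != w.
Proof. by case/joins_ends => [][<- <-]; rewrite // eq_sym. Qed.

Lemma inner_small T : #|T| <= 1 -> #|inner T| = 0.
Proof.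
move=> /card_le1_eqP T1; apply/eqP; rewrite cards_eq0; apply/eqP/setP => f; rewrite !inE.
by apply/negP => /andP[s t]; move: (Hl f); rewrite (T1 _ _ s t) eqxx.
Qed.

Lemma has_cycle_card T : has_cycle T -> 1 < #|T| /\ 1 < #|inner T|.
Proof.
case=> k [vs [es [[vi [ei jn]] inT]]].
have d01 : vs ord0 != vs (ordS ord0) := joins_neq (jn ord0).
split; apply/card_gt1P.
  by exists (vs ord0), (vs (ordS ord0)); rewrite !inT.
exists (es ord0), (es (ordS ord0)); rewrite !(joins_inner (jn _)) ?inT //.
by split=> //; apply: contraNneq d01 => /ei <-.
Qed.

Definition tpath T n (p : nat -> vert G) (g : nat -> edge G) :=
  [/\ forall i, i <= n -> p i \in T,
      {in [pred i | i <= n] &, injective p} &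
      forall i, i < n -> joins (g i) (p i) (p i.+1)].

Section PathToCycle.
Variable T : {set vert G}.
Variables (n : nat) (p : nat -> vert G) (g : nat -> edge G).

Lemma tpath_edge_inj : tpath T n p g -> {in [pred i | i < n] &, injective g}.
Proof.
case=> _ pinj pj a b an bn gab; move: (pj a an); rewrite gab => ja.
have le_n i : i < n -> i \in [pred i | i <= n] := @ltnW i n.
case: (joins_same ja (pj b bn)) => [][pab pab'].
  exact: pinj (le_n _ an) (le_n _ bn) pab.
have := pinj _ _ (le_n _ an) bn pab; have := pinj _ _ an (le_n _ bn) pab'.
lia.
Qed.

Lemma tpath_card : tpath T n p g -> n < #|T|.
Proof.
case=> pT pinj _; have <- : #|[set p (val i) | i : 'I_n.+1]| = n.+1.
  rewrite card_imset ?card_ord // => i i' ii'; apply: val_inj.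
  exact: (pinj (val i) (val i') (ltn_ord i) (ltn_ord i') ii').
by apply: subset_leq_card; apply/subsetP => _ /imsetP [i _ ->]; apply: pT; rewrite -ltnS ltn_ord.
Qed.

Lemma tpath_drop i : i <= n -> tpath T n p g ->
  tpath T (n - i) (fun t => p (i + t)) (fun t => g (i + t)).
Proof.
move=> i_n [pT pinj pj]; split=> [t tn|t t'|t tn].
- by apply: pT; lia.
- rewrite !inE => tn t'n ptt'; apply/eqP; rewrite -(eqn_add2l i); apply/eqP.
  by apply: (pinj (i + t) (i + t')) => //; rewrite inE; lia.
- by rewrite addnS; apply: pj; lia.
Qed.

Lemma tpath_extend w f : tpath T n p g -> w \in T -> (forall i, i <= n -> p i != w) ->
  joins f (p n) w ->
  tpath T n.+1 (fun t => if t == n.+1 then w else p t) (fun t => if t == n then f else g t).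
Proof.
move=> [pT pinj pj] wT pw jf; split=> [t tn1|t t'|t tn1].
- by case: eqP => [//|/eqP tn]; apply: pT; lia.
- rewrite !inE => tn1 t'n1; case: eqP => [->|/eqP tn]; case: eqP => [->|/eqP t'n] //.
  + move=> wp; have t'_le : t' <= n by lia.
    by move: (pw _ t'_le); rewrite wp eqxx.
  + move=> ptw; have t_le : t <= n by lia.
    by move: (pw _ t_le); rewrite ptw eqxx.
  + by apply: (pinj t t'); rewrite inE; lia.
- case: eqP => [->|/eqP tn]; first by rewrite eqxx (ltn_eqF (ltnSn n)).
  have -> : (t == n.+1) = false by lia.
  by rewrite eqSS (negbTE tn); apply: pj; lia.
Qed.

(* for [n = 0], [f] is a loop, i.e. a cycle of length one *)
Lemma tpath_close f : tpath T n p g -> (forall i, i < n -> g i != f) ->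
  joins f (p n) (p 0) -> has_cycle T.
Proof.
move=> P gf jf; have [pT pinj pj] := P; have ginj := tpath_edge_inj P.
have lastE (t : 'I_n.+1) : (t < n) = false -> val t = n.
  by move/negbT; rewrite -leqNgt => nt; apply/eqP; rewrite eqn_leq nt -ltnS ltn_ord.
exists n, (fun t : 'I_n.+1 => p t), (fun t : 'I_n.+1 => if t < n then g t else f).
split=> [|t]; last by apply: pT; rewrite -ltnS.
split; [|split].
- by move=> t t' tt'; apply: val_inj; exact: pinj (ltn_ord t) (ltn_ord t') tt'.
- move=> t t'; case: ifP => tn; case: ifP => t'n gtt'.
  + by apply: val_inj; apply: (ginj (val t) (val t')).
  + by move: (gf _ tn); rewrite gtt' eqxx.
  + by move: (gf _ t'n); rewrite -gtt' eqxx.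
  + by apply: val_inj; rewrite (lastE _ tn) (lastE _ t'n).
- move=> t; rewrite /ordS /=; case: ifP => tn.
    by rewrite modn_small ?ltnS //; apply: pj.
  by rewrite (lastE _ tn) modnn.
Qed.

End PathToCycle.

Lemma tpath_has_cycle T : (forall u, u \in T -> 1 < inner_deg T u) ->
  forall k n p g, #|T| - n <= k -> tpath T n p g -> has_cycle T.
Proof.
move=> deg2; elim=> [|k IH] n p g Tn P; have := tpath_card P; first lia.
move=> _; have [pT pinj pj] := P.
have [f] := card_gt1_neq (g n.-1) (deg2 _ (pT n (leqnn n))).
rewrite !inE => /andP[/andP[fs ft] fu] fg.
set w := other_end f (p n); have jf : joins f (p n) w := incident_other_end fu.
have wT : w \in T by rewrite /w /other_end; case: ifP.
case: (boolP [exists i : 'I_n.+1, p i == w]) => [/existsP [i /eqP piw] | /existsPn pw].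
  have i_n : i < n.
    rewrite ltn_neqAle -ltnS ltn_ord andbT; apply: contraTneq (joins_neq jf) => i_n.
    by rewrite -piw i_n eqxx.
  apply: (tpath_close (f := f) (tpath_drop (ltnW i_n) P)); last first.
    by rewrite addn0 (subnKC (ltnW i_n)) piw.
  move=> t t_lt; apply/eqP => gf; have jt := pj (i + t) ltac:(lia); rewrite gf in jt.
  case: (joins_same jf jt) => [][e1 e2].
    by have := pinj n (i + t) (leqnn n) ltac:(rewrite inE; lia) e1; lia.
  have := pinj n (i + t).+1 (leqnn n) ltac:(rewrite inE; lia) e1 => n_it.
  by move: fg; rewrite n_it /= gf eqxx.
apply: IH (tpath_extend P wT _ jf); first lia.
by move=> i i_le; apply: (pw (Ordinal (i_le : i < n.+1))).
Qed.

Lemma min_deg2_has_cycle T : (forall u, u \in T -> 1 < inner_deg T u) ->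
  T != set0 -> has_cycle T.
Proof.
move=> deg2 /set0Pn [u uT]; have /card_gt1P [f _] := deg2 u uT.
apply: (tpath_has_cycle deg2 (k := #|T|) (n := 0) (p := fun _ => u) (g := fun _ => f)).
  by rewrite subn0.
by split=> // i i'; rewrite !inE !leqn0 => /eqP -> /eqP ->.
Qed.

Lemma card_inner_D1 T u : u \in T -> #|inner T| = #|inner (T :\ u)| + inner_deg T u.
Proof.
move=> uT; rewrite /inner_deg !card_set_sum -big_split /=; apply: eq_bigr => f _.
rewrite !inE /incident; case: (src f =P u) => [->|su]; case: (tgt f =P u) => [->|tu].
all: by rewrite ?eqxx ?uT //=; case: (src f \in T); case: (tgt f \in T).
Qed.

Lemma acyclic_card_inner T : ~ has_cycle T -> T != set0 -> #|inner T| < #|T|.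
Proof.
move: {2}#|T| (leqnn #|T|) => m; elim: m T => [|m IH] T Tm acT T0.
  by move: T0; rewrite -card_gt0; lia.
case: (boolP [forall u in T, 1 < inner_deg T u]) => [/forall_inP deg2|/forall_inPn [u uT]].
  by case: acT; apply: min_deg2_has_cycle.
rewrite -leqNgt => deg_u.
have [Tu0|Tu0] := eqVneq (T :\ u) set0.
  have T1 : #|T| = 1 by rewrite (cardsD1 u T) uT Tu0 cards0.
  by rewrite inner_small T1.
rewrite (card_inner_D1 uT) (cardsD1 u T) uT.
have := IH (T :\ u) _ (fun c => acT (has_cycleS (subD1set T u) c)) Tu0.
move: Tm; rewrite (cardsD1 u T) uT => Tm /(_ Tm); lia.
Qed.

End Multigraph.

Section CubicCyclicallyFourConnected.
Variable G : mgraph.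
Hypotheses (Hl : loopless G) (Hcub : cubic G) (Hc4 : cyc_edge_conn G 4).
Implicit Types T : {set vert G}.

Lemma cut_card1 T : #|T| = 1 -> #|cut T| = 3.
Proof. by move=> T1; have := cubic_handshake T Hcub; rewrite inner_small ?T1. Qed.

(* an acyclic [T] has fewer inner edges than vertices, so [3 |T| < 2 |T| + |cut T|] *)
Lemma small_cut_has_cycle T : 1 < #|T| -> #|cut T| <= 3 -> has_cycle T.
Proof.
move=> T2 cutT; apply: NNPP => acT.
have := acyclic_card_inner Hl acT; rewrite -card_gt0 => /(_ (ltnW T2)).
have := cubic_handshake T Hcub; lia.
Qed.

Lemma cut_ge4 T : 1 < #|T| -> 1 < #|~: T| -> 3 < #|cut T|.
Proof.
move=> T2 TC2; rewrite ltnNge; apply/negP => cutT.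
have cutTC : #|cut (~: T)| <= 3 by rewrite cutC.
have := Hc4 (conj (small_cut_has_cycle T2 cutT) (small_cut_has_cycle TC2 cutTC)); lia.
Qed.

End CubicCyclicallyFourConnected.

Lemma sum_option (T : finType) (F : option T -> nat) :
  \sum_o F o = F None + \sum_t F (Some t).
Proof. by rewrite ![index_enum _]unlock [@Finite.enum in LHS]unlock /= big_cons big_map. Qed.

Notation o1 := (@Ordinal 4 1 isT).
Notation o2 := (@Ordinal 4 2 isT).
Notation o3 := (@Ordinal 4 3 isT).

Lemma ord4P (m : 'I_4) : [\/ m = ord0, m = o1, m = o2 | m = o3].
Proof. by case: m => [[|[|[|[|k]]]] hk]; try by [constructor; apply: val_inj]. Qed.

Lemma sum_ord4 (F : 'I_4 -> nat) : \sum_(m < 4) F m = F ord0 + F o1 + F o2 + F o3.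
Proof.
by rewrite !big_ord_recl big_ord0 addn0 !addnA; congr (_ + _ + _ + _); congr F; apply: val_inj.
Qed.

Lemma sum_side (j : 'I_4) : j != ord0 -> \sum_m side j m = 2.
Proof. by rewrite sum_ord4; case: (ord4P j) => ->. Qed.

Lemma sum_side2 (j1 j2 : 'I_4) (F : bool -> bool -> bool) :
  j1 != ord0 -> j2 != ord0 -> j1 != j2 ->
  \sum_m F (side j1 m) (side j2 m) = F true true + F true false + F false true + F false false.
Proof.
case: j1 => [[|[|[|[|k]]]] h1] //; case: j2 => [[|[|[|[|k']]]] h2] // _ _ _.
all: by rewrite sum_ord4 /side -!val_eqE /= ?eqE /=; lia.
Qed.

(* The counting behind the cuts of [G^A_(0j)]: [b m] says whether [v m] lies on the side [T] of a
   cut of [G[A]], [x] and [y] where the two new vertices lie, [I] counts the edges of [G[A]] across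
   [T], and [I + sum b] and [I + sum ~~ b] are the cuts of [T] and [A :\: T] in [G]. *)
Lemma cut_trace_cases (s b : 'I_4 -> bool) (x y : bool) (I nS nC : nat) :
  s ord0 -> \sum_m s m = 2 ->
  \sum_m b m <= nS -> \sum_m ~~ b m <= nC ->
  (0 < nS -> 2 < I + \sum_m b m) -> (1 < nS -> 3 < I + \sum_m b m) ->
  (0 < nC -> 2 < I + \sum_m ~~ b m) -> (1 < nC -> 3 < I + \sum_m ~~ b m) ->
  let d := I + (x != y) + \sum_m (b m != if s m then x else y) in
  (0 < nS + x + y -> 0 < nC + ~~ x + ~~ y -> 2 < d) /\
  (1 < nS + x + y -> 1 < nC + ~~ x + ~~ y -> d <= 3 ->
   (forall m, b m = if s m then x else y) /\
   (x && ~~ y && (I + \sum_m b m == 4) || ~~ x && y && (I + \sum_m ~~ b m == 4))).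
Proof.
rewrite /= !sum_ord4 => s0.
have -> : (forall m, b m = if s m then x else y) <->
   [/\ b ord0 = (if s ord0 then x else y), b o1 = (if s o1 then x else y),
       b o2 = (if s o2 then x else y) & b o3 = (if s o3 then x else y)].
  by split=> [bs|[? ? ? ?] m]; [split | case: (ord4P m) => ->].
rewrite s0; move: (s o1) (s o2) (s o3) (b ord0) (b o1) (b o2) (b o3).
move=> [] [] [] // [] [] [] [] ; case: x; case: y.
all: split=> *; first [lia | exfalso; lia | split; [by [] | lia]].
Qed.

Lemma cut_submod (G : mgraph) (X Y : {set vert G}) :
  #|cut (X :&: Y)| + #|cut (X :|: Y)| <= #|cut X| + #|cut Y|.
Proof.
rewrite /cut !card_set_sum -!big_split /=; apply: leq_sum => f _; rewrite !inE.
by case: (src f \in X); case: (src f \in Y); case: (tgt f \in X); case: (tgt f \in Y).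
Qed.

Section FourEdgeCut.
Variable G : mgraph.
Hypotheses (Hl : loopless G) (Hcub : cubic G) (Hc4 : cyc_edge_conn G 4).
Variable A : {set vert G}.
Hypotheses (HAcyc : cyclic_cut A) (HA4 : #|cut A| = 4).
Variable e : 'I_4 -> edge G.
Hypotheses (Heinj : injective e) (Hecut : forall m, e m \in cut A).
Variable v : 'I_4 -> Avert A.
Hypothesis Hv : forall m, (val (v m) == src (e m)) || (val (v m) == tgt (e m)).
Implicit Types W X Y : {set vert G}.

Lemma vA m : val (v m) \in A.
Proof. exact: valP. Qed.

Lemma cutA_edges : cut A = [set e m | m : 'I_4].
Proof.
apply/eqP; rewrite eq_sym eqEcard card_imset // card_ord HA4 leqnn andbT.
by apply/subsetP => _ /imsetP [m _ ->].
Qed.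

Lemma e_outer_end m : exists2 x, x \notin A & joins (e m) (val (v m)) x.
Proof.
have := Hecut m; rewrite inE.
case/orP: (Hv m) => /eqP vm; rewrite -vm vA => eA.
- exists (tgt (e m)); first by move: eA; case: (_ \in A).
  by rewrite /joins vm !eqxx.
- exists (src (e m)); first by move: eA; case: (_ \in A).
  by rewrite /joins vm !eqxx orbT.
Qed.

Definition inner_cut W := \sum_(f in inner A) (f \in cut W).

Definition ends_in W := \sum_m (val (v m) \in W).

Lemma e_in_cut m : exists2 x, x \notin A &
  forall W, (e m \in cut W) = ((val (v m) \in W) != (x \in W)).
Proof.
have [x xA jx] := e_outer_end m; exists x => // W.
by rewrite inE; case/joins_ends: jx => [][-> ->] //; rewrite eq_sym.
Qed.

Lemma e_in_cut_sub W m : W \subset A -> (e m \in cut W) = (val (v m) \in W).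
Proof.
move=> sWA; have [x xA ->] := e_in_cut m.
by rewrite (contraNF (subsetP sWA x) xA); case: (_ \in W).
Qed.

Lemma sum_cutA (F : edge G -> nat) : \sum_(f in cut A) F f = \sum_m F (e m).
Proof. by rewrite cutA_edges big_imset //= => m m' _ _; apply: Heinj. Qed.

Lemma card_cut_sub W : W \subset A -> #|cut W| = inner_cut W + ends_in W.
Proof.
move=> sWA; have -> : ends_in W = \sum_m (e m \in cut W).
  by apply: eq_bigr => m _; rewrite e_in_cut_sub.
rewrite -(sum_cutA (fun f => nat_of_bool (f \in cut _))) /inner_cut.
rewrite big_mkcond [X in _ + X]big_mkcond -big_split card_set_sum /=; apply: eq_bigr => f _.
move: (subsetP sWA (src f)) (subsetP sWA (tgt f)); rewrite !inE.
by case: (src f \in W); case: (tgt f \in W); case: (src f \in A); case: (tgt f \in A);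
  move=> sW tW //; by [move: (sW isT) | move: (tW isT)].
Qed.

Lemma inner_cut_setD W : inner_cut (A :\: W) = inner_cut W.
Proof.
apply: eq_bigr => f; rewrite !inE => /andP[-> ->].
by case: (src f \in W); case: (tgt f \in W).
Qed.

Lemma card_cut_setD W : #|cut (A :\: W)| = inner_cut W + ends_in (A :\: W).
Proof. by rewrite card_cut_sub ?subsetDl // inner_cut_setD. Qed.

Lemma ends_in_setD W : ends_in W + ends_in (A :\: W) = 4.
Proof.
rewrite -big_split (eq_bigr (fun _ => 1)) ?sum_nat_const ?card_ord // => m _.
by rewrite !inE vA andbT; case: (_ \in W).
Qed.

Lemma card_cut_setD_ends W : W \subset A ->
  #|cut (A :\: W)| + 2 * ends_in W = #|cut W| + 4.
Proof.
move=> sWA; rewrite card_cut_setD card_cut_sub //; have := ends_in_setD W; lia.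
Qed.

Lemma card_notA : 1 < #|~: A|.
Proof. exact: (has_cycle_card Hl HAcyc.2).1. Qed.

Lemma card_A : 2 < #|A|.
Proof.
have := (has_cycle_card Hl HAcyc.1).2; have := cubic_handshake A Hcub; rewrite HA4; lia.
Qed.

Lemma subA_card_compl W : W \subset A -> 1 < #|~: W|.
Proof. by move=> sWA; apply: leq_trans card_notA _; apply: subset_leq_card; rewrite setCS. Qed.

Lemma subA_cut_ge4 W : W \subset A -> 1 < #|W| -> 3 < #|cut W|.
Proof. by move=> sWA W2; apply: (cut_ge4 Hl Hcub Hc4) => //; apply: subA_card_compl. Qed.

Lemma subA_cut_ge3 W : W \subset A -> 0 < #|W| -> 2 < #|cut W|.
Proof.
move=> sWA W0; have [W1|W2] := leqP #|W| 1; last exact: ltnW (subA_cut_ge4 sWA W2).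
by rewrite (cut_card1 Hl Hcub) //; lia.
Qed.

Lemma subA_small_cut W : W \subset A -> #|cut W| <= 3 -> #|W| <= 1.
Proof. by move=> sWA cutW; rewrite leqNgt; apply: contraTN cutW => /(subA_cut_ge4 sWA); lia. Qed.

(* if [v m = v m'] then [A :\ v m] has a cut of size at most [3 + 4 - 2 * 2] *)
Lemma v_inj : injective v.
Proof.
move=> m m' vmm'; apply/eqP/negPn/negP => mm'.
pose W := [set val (v m)]; have sWA : W \subset A by rewrite sub1set vA.
have ends2 : 1 < ends_in W.
  rewrite /ends_in (bigD1 m) //= (bigD1 m') /= ?(eq_sym m') //.
  by rewrite /W !inE vmm' eqxx.
have cutW : #|cut W| = 3 by rewrite (cut_card1 Hl Hcub) ?cards1.
have AW2 : 1 < #|A :\: W| by have := card_A; rewrite /W (cardsD1 (val (v m)) A) vA; lia.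
have := subA_cut_ge4 (subsetDl A W) AW2; have := card_cut_setD_ends sWA; lia.
Qed.

Lemma ends_in_le W : ends_in W <= #|W|.
Proof.
rewrite /ends_in -card_set_sum -(card_in_imset (f := fun m => val (v m))).
  by apply: subset_leq_card; apply/subsetP => _ /imsetP [m mW ->]; rewrite inE in mW.
by move=> m m' _ _ /val_inj /v_inj.
Qed.

Section Trace.
Variable j : 'I_4.
Implicit Types S : {set vert (GA v j)}.

Definition trace S : {set vert G} :=
  [set x | if (insub x : option (Avert A)) is Some a then inl a \in S else false].

Lemma trace_val S a : (val a \in trace S) = (inl a \in S).
Proof. by rewrite inE valK. Qed.

Lemma trace_sub S : trace S \subset A.
Proof. by apply/subsetP => x; rewrite inE; case: insubP. Qed.

Lemma trace_setC S : trace (~: S) = A :\: trace S.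
Proof.
apply/setP => x; rewrite !inE; case: insubP => [a xA <-|/negPf ->] //.
by rewrite inE (valP a) andbT.
Qed.

Lemma sum_Aedge (F : edge G -> nat) :
  \sum_(f : Aedge A) F (val f) = \sum_(f in inner A) F f.
Proof.
pose P := [pred f : edge G | (src f \in A) && (tgt f \in A)].
rewrite (eq_bigl (fun f => (f \in P) && xpredT f)) => [|f]; last by rewrite inE andbT.
by rewrite (big_sub_cond P xpredT).
Qed.

Lemma card_GA S : #|S| = #|trace S| + (inr true \in S) + (inr false \in S).
Proof.
rewrite -!sum1_card !big_mkcond /= big_sumType /= big_bool /= addnA; congr (_ + _ + _).
rewrite (_ : \sum_i (if inl i \in S then 1 else 0) =
             \sum_(x in A) (if x \in trace S then 1 else 0)); last first.
  by rewrite [RHS]big_sub; apply: eq_bigr => a _; rewrite trace_val.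
rewrite [RHS]big_mkcond /= [LHS]big_mkcond /=; apply: eq_bigr => x _.
case: ifP => // xA; case: ifP => // xS.
by rewrite (subsetP (trace_sub S) x xS) in xA.
Qed.

Lemma cut_GA S : #|cut S| = inner_cut (trace S) + ((inr true \in S) != (inr false \in S))
   + \sum_m ((val (v m) \in trace S) != (inr (side j m) \in S)).
Proof.
rewrite /cut card_set_sum big_sumType /= sum_option /= /inner_cut -sum_Aedge -addnA.
congr (_ + (_ + _)).
- by apply: eq_bigr => f _ /=; rewrite [X in _ = nat_of_bool X]inE -!trace_val.
- by under [RHS]eq_bigr do rewrite trace_val.
Qed.

Hypothesis j0 : j != ord0.

Lemma GA_cut_cases S :
  (0 < #|S| -> 0 < #|~: S| -> 2 < #|cut S|) /\
  (1 < #|S| -> 1 < #|~: S| -> #|cut S| <= 3 ->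
     (forall m, (val (v m) \in trace S) = (inr (side j m) \in S)) /\
     exists2 X : {set vert G},
       X \subset A & (forall m, (val (v m) \in X) = side j m) /\ #|cut X| = 4).
Proof.
set T := trace S; set x := inr true \in S; set y := inr false \in S.
have sTA : T \subset A := trace_sub S.
have sideE m : (inr (side j m) \in S) = if side j m then x else y by case: (side j m).
have cutS : #|cut S| = inner_cut T + (x != y)
    + \sum_m ((val (v m) \in T) != if side j m then x else y).
  by rewrite cut_GA; under eq_bigr do rewrite sideE.
have cardSC : #|~: S| = #|A :\: T| + ~~ x + ~~ y by rewrite card_GA trace_setC !inE.
have endsD : ends_in (A :\: T) = \sum_m ~~ (val (v m) \in T).
  by apply: eq_bigr => m _; rewrite !inE vA andbT.
have cutT := card_cut_sub sTA; have cutD := card_cut_setD T; rewrite endsD in cutD.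
have sDA : A :\: T \subset A := subsetDl A T.
have le2 : \sum_m ~~ (val (v m) \in T) <= #|A :\: T| by rewrite -endsD ends_in_le.
have [C1 C2] := cut_trace_cases x y (isT : side j ord0) (sum_side j0) (ends_in_le T) le2
  (fun T0 => leq_trans (subA_cut_ge3 sTA T0) (eq_leq cutT))
  (fun T1 => leq_trans (subA_cut_ge4 sTA T1) (eq_leq cutT))
  (fun D0 => leq_trans (subA_cut_ge3 sDA D0) (eq_leq cutD))
  (fun D1 => leq_trans (subA_cut_ge4 sDA D1) (eq_leq cutD)).
split=> [S0 SC0|S1 SC1 cutS3].
  by rewrite cutS; apply: C1; rewrite -?card_GA -?cardSC.
have [sideT cut4] := C2 ltac:(by rewrite -card_GA) ltac:(by rewrite -cardSC)
  ltac:(by rewrite -cutS).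
split=> [m|]; first by rewrite sideE sideT.
case/orP: cut4 => /andP [/andP [xt yf] cut4].
  exists T => //; split; last by rewrite cutT; apply/eqP.
  by move=> m; rewrite sideT xt (negbTE yf); case: (side j m).
exists (A :\: T) => //; split; last by rewrite cutD; apply/eqP.
by move=> m; rewrite in_setD vA andbT sideT (negbTE xt) yf; case: (side j m).
Qed.

End Trace.

(* by submodularity the two opposite corners have cuts summing to at most [8 - 2], so both are 3 *)
Lemma crossing_cuts_corners X Y : X \subset A -> Y \subset A ->
  #|cut X| = 4 -> #|cut Y| = 4 ->
  0 < ends_in (X :&: Y) -> ends_in (A :\: (X :|: Y)) = 1 ->
  #|X :&: Y| <= 1 /\ #|A :\: (X :|: Y)| <= 1.
Proof.
move=> sXA sYA cutX cutY endsI endsW.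
have sIA : X :&: Y \subset A by rewrite subIset ?sXA.
have sWA : A :\: (X :|: Y) \subset A := subsetDl A _.
have AW : A :\: (A :\: (X :|: Y)) = X :|: Y.
  by rewrite setDDr setDv set0U; apply/setIidPr; rewrite subUset sXA.
have := card_cut_setD_ends sWA; rewrite AW endsW.
have := cut_submod X Y; rewrite cutX cutY.
have := subA_cut_ge3 sIA (leq_trans endsI (ends_in_le _)).
have := subA_cut_ge3 sWA (leq_trans (eq_leq (esym endsW)) (ends_in_le _)) => geW geI sub setD.
by split; apply: subA_small_cut => //; lia.
Qed.

(* the four corners cut out by [X] and [Y] each contain one [v m] and at most one vertex *)
Lemma crossing_side_cuts_card_A j1 j2 X Y :
  j1 != ord0 -> j2 != ord0 -> j1 != j2 -> X \subset A -> Y \subset A ->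
  (forall m, (val (v m) \in X) = side j1 m) -> (forall m, (val (v m) \in Y) = side j2 m) ->
  #|cut X| = 4 -> #|cut Y| = 4 -> #|A| <= 4.
Proof.
move=> n1 n2 n12 sXA sYA mX mY cutX cutY.
have endsE (F : bool -> bool -> bool) W :
    (forall m, (val (v m) \in W) = F (side j1 m) (side j2 m)) ->
    ends_in W = F true true + F true false + F false true + F false false.
  by move=> WF; rewrite -(sum_side2 F n1 n2 n12); apply: eq_bigr => m _; rewrite WF.
have inD W m : (val (v m) \in A :\: W) = (val (v m) \notin W) by rewrite in_setD vA andbT.
have sYcA : A :\: Y \subset A := subsetDl A Y.
have cutYc : #|cut (A :\: Y)| = 4.
  have := card_cut_setD_ends sYA; rewrite cutY (endsE (fun _ b => b)) // => m; lia.
have [XY W] := crossing_cuts_corners sXA sYA cutX cutY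
  ltac:(by rewrite (endsE andb) // => m; rewrite in_setI mX mY)
  ltac:(by rewrite (endsE (fun a b => ~~ (a || b))) // => m; rewrite inD in_setU mX mY).
have [XYc Wc] := crossing_cuts_corners sXA sYcA cutX cutYc
  ltac:(by rewrite (endsE (fun a b => a && ~~ b)) // => m; rewrite in_setI inD mX mY)
  ltac:(by rewrite (endsE (fun a b => ~~ (a || ~~ b))) // => m; rewrite inD in_setU inD mX mY).
rewrite setIDA (setIidPl sXA) in XYc.
rewrite setDUr setDDr setDv set0U (setIidPr sYA) in Wc.
rewrite -setDDl in W.
have := cardsID Y X; have := cardsID Y (A :\: X); have := cardsID X A.
rewrite (setIidPr sXA); lia.
Qed.

(* a cycle of [G[A]] spans at least [4] vertices, for otherwise its vertex set has a cut [<= 3] *)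
Lemma card_A_le4_C4 : #|A| <= 4 -> is_C4 A.
Proof.
move=> A4; case: HAcyc => [[k [vs [es [[vi [ei jn]] inA]]]] _].
pose T := [set vs i | i : 'I_k.+1].
have cardT : #|T| = k.+1 by rewrite card_imset // card_ord.
have sTA : T \subset A by apply/subsetP => _ /imsetP [i _ ->].
have esT i : es i \in inner T by apply: joins_inner (jn i) _ _; apply: imset_f.
have innerT : k.+1 <= #|inner T|.
  rewrite -[k.+1]card_ord -(card_imset _ ei).
  by apply: subset_leq_card; apply/subsetP => _ /imsetP [i _ ->].
have cycT : has_cycle T by exists k, vs, es; split=> // i; apply: imset_f.
have T2 := (has_cycle_card Hl cycT).1.
have := subA_cut_ge4 sTA T2; have := cubic_handshake T Hcub; rewrite cardT => hs cutT.
have TA : T = A by apply/eqP; rewrite eqEcard sTA cardT; lia.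
have k3 : k = 3 by move: A4; rewrite -TA cardT; lia.
subst k; have innerA : #|inner A| = 4 by have := cubic_handshake A Hcub; rewrite HA4 -TA cardT; lia.
have innerE : inner A = [set es i | i : 'I_4].
  apply/eqP; rewrite eq_sym eqEcard card_imset // card_ord innerA leqnn andbT.
  by apply/subsetP => _ /imsetP [i _ ->]; rewrite -TA.
exists vs, es; split=> //; split=> [x|f fA tA].
  by rewrite -TA; split=> [/imsetP [i _ ->]|[i <-]]; [exists i | apply: imset_f].
have : f \in inner A by rewrite inE fA tA.
by rewrite innerE => /imsetP [i _ ->]; exists i.
Qed.

Lemma GA_loopless j : loopless (GA v j).
Proof.
case=> [f|[m|]] //=; apply/negP => /eqP fst.
have := congr1 (fun x : gvert A => if x is inl a then val a else src (val f)) fst.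
by move=> /= fst'; move: (Hl (val f)); rewrite fst' eqxx.
Qed.

Section SideCut.
Variables (j : 'I_4) (j0 : j != ord0).

Lemma GA_edge_conn3 : edge_conn (GA v j) 3.
Proof.
move=> S S0 ST; apply: (GA_cut_cases j0 S).1; rewrite card_gt0 //.
by apply: contraNneq ST => SC; rewrite -[S]setCK SC setC0.
Qed.

Lemma GA_cyclic_cut3_eA m S : cyclic_cut S -> #|cut S| = 3 -> eA v j m \notin cut S.
Proof.
move=> [cycS cycSC] cutS.
have [traceS _] := (GA_cut_cases j0 S).2 (has_cycle_card (@GA_loopless j) cycS).1
  (has_cycle_card (@GA_loopless j) cycSC).1 (eq_leq cutS).
by rewrite inE /= -trace_val traceS eqxx.
Qed.

Lemma GA_not_cyc4 : ~ cyc_edge_conn (GA v j) 4 ->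
  exists2 X : {set vert G}, X \subset A & (forall m, (val (v m) \in X) = side j m) /\ #|cut X| = 4.
Proof.
move=> /not_all_ex_not [S] notS; have [[cycS cycSC] cutS] := imply_to_and _ _ notS.
apply: ((GA_cut_cases j0 S).2 (has_cycle_card (@GA_loopless j) cycS).1
  (has_cycle_card (@GA_loopless j) cycSC).1 _).2.
by rewrite leqNgt; apply/negP.
Qed.

End SideCut.

End FourEdgeCut.

Lemma two_of_three (P : 'I_4 -> Prop) :
  (forall j1 j2, j1 != ord0 -> j2 != ord0 -> j1 != j2 -> ~ P j1 -> ~ P j2 -> False) ->
  exists j1 j2 : 'I_4, [/\ j1 != ord0, j2 != ord0, j1 != j2, P j1 & P j2].
Proof.
move=> one_fails; have P_or (j1 j2 : 'I_4) : j1 != ord0 -> j2 != ord0 -> j1 != j2 -> P j1 \/ P j2.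
  by move=> n1 n2 n12; apply: NNPP => /not_or_and [] /(one_fails _ _ n1 n2 n12).
have [P1|nP1] := classic (P o1).
  have [P2|nP2] := classic (P o2); first by exists o1, o2.
  by case: (P_or o2 o3 isT isT isT) => // P3; exists o1, o3.
case: (P_or o1 o2 isT isT isT) => // P2; case: (P_or o1 o3 isT isT isT) => // P3.
by exists o2, o3.
Qed.

Theorem mainTheorem11 (G : mgraph)
  (Hloop : loopless G) (Hcub : cubic G) (Hc4 : cyc_edge_conn G 4)
  (A : {set vert G}) (HAcyc : cyclic_cut A) (HA4 : #|cut A| = 4)
  (e : 'I_4 -> edge G) (Heinj : injective e) (Hecut : forall m, e m \in cut A)
  (v : 'I_4 -> Avert A)
  (Hv : forall m, (val (v m) == src (e m)) || (val (v m) == tgt (e m))) :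
  (forall j : 'I_4, j != ord0 ->
     edge_conn (GA v j) 3 /\
     (forall (m : 'I_4) (S : {set vert (GA v j)}),
        cyclic_cut S -> #|cut S| = 3 -> eA v j m \notin cut S)) /\
  (~ is_C4 A ->
     exists j1 j2 : 'I_4, [/\ j1 != ord0, j2 != ord0, j1 != j2,
        cyc_edge_conn (GA v j1) 4 & cyc_edge_conn (GA v j2) 4]).
Proof.
split=> [j j0|notC4]; first split.
- exact: (GA_edge_conn3 Hloop Hcub Hc4 HAcyc HA4 Heinj Hecut Hv j0).
- exact: (GA_cyclic_cut3_eA Hloop Hcub Hc4 HAcyc HA4 Heinj Hecut Hv j0).
apply: two_of_three => j1 j2 n1 n2 n12 bad1 bad2.
have [X sXA [mX cutX]] := GA_not_cyc4 Hloop Hcub Hc4 HAcyc HA4 Heinj Hecut Hv n1 bad1.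
have [Y sYA [mY cutY]] := GA_not_cyc4 Hloop Hcub Hc4 HAcyc HA4 Heinj Hecut Hv n2 bad2.
apply: notC4; apply: (card_A_le4_C4 Hloop Hcub Hc4 HAcyc HA4).
exact: (crossing_side_cuts_card_A Hloop Hcub Hc4 HAcyc HA4 Heinj Hecut Hv
  n1 n2 n12 sXA sYA mX mY cutX cutY).
Qed.
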